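(* Let $n\in\mathbb{N}$, $0\le x_0<x_1<\cdots<x_n$, $I:=[x_0,x_n]$, and for $i\in\{1,\dots,n\}$ let $l_i:I\to[x_{i-1},x_i]$ be a contractive homeomorphism with $l_i(x_0)=x_{i-1}$, $l_i(x_n)=x_i$. Let $L:C^+I\to C^+I$ be a bounded semi-linear operator, and let $f,S_1,\dots,S_n\in C^+I$ with $Lf(x_0)=f(x_0)$ and $Lf(x_n)=f(x_n)$. Define $T$ on $C^+I$ by $$Tg:=f+(S_i\circ l_i^{-1})\cdot\big((g-Lf)\circ l_i^{-1}\big)\quad\text{on } I_i,\ i=1,\dots,n,$$ and assume that $Tg$ takes values in $\mathbb{R}_0^+$ and satisfies the join-up conditions $Tg(x_j-)=Tg(x_j+)$ for $j=1,\dots,n-1$, so that $T:C^+I\to C^+I$. Let $S_\infty:=\max_{i}\|S_i\|_\infty$. If $S_\infty<1$, then $T$ is contractive on $(C^+I,d)$, and its unique fixed point $f^*\in C^+I$ satisfies $$f^*=f+(S_i\circ l_i^{-1})\cdot\big((f^*-Lf)\circ l_i^{-1}\big)\quad\text{on } I_i,\ i=1,\dots,n.$$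
   Context: $\mathbb{R}_0^+:=[0,\infty)$. $C^+I:=\{f\in C(I):f(I)\subset\mathbb{R}_0^+\}$, a semi-vector space over $\mathbb{R}_0^+$ (pointwise addition, nonnegative scalar multiplication), with metric $d(f,g):=\max_{x\in I}(\max\{f(x),g(x)\}-\min\{f(x),g(x)\})$, under which it is complete. $\|\cdot\|_\infty$ is the supremum norm. A map $L$ is semi-linear if $L(u+v)=Lu+Lv$ and $L(\lambda u)=\lambda Lu$ for $\lambda\ge0$; it is bounded if $d(Lu,0)\le M\,d(u,0)$ for some $M>0$ and all $u$. $I_i:=[x_{i-1},x_i)$ for $i<n$, $I_n:=[x_{n-1},x_n]$. Contractive means Lipschitz with constant $<1$ with respect to $d$. *)

From Stdlib Require Import Reals Lra.
From Coquelicot Require Import Coquelicot.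
Open Scope R_scope.

Definition cont_on (a b : R) (g : R -> R) : Prop :=
  forall y, a <= y <= b ->
    filterlim g (within (fun z => a <= z <= b) (locally y)) (locally (g y)).

Definition CplusI (a b : R) (g : R -> R) : Prop :=
  cont_on a b g /\ (forall y, a <= y <= b -> 0 <= g y).

(* The metric d(g,h) = max_{y in [a,b]} (max{g y,h y} - min{g y,h y})
   (written as a supremum, which is attained for continuous g,h). *)
Definition dI (a b : R) (g h : R -> R) : R :=
  real (Lub_Rbar (fun r => exists y, a <= y <= b /\
                    r = Rmax (g y) (h y) - Rmin (g y) (h y))).

Definition in_piece (n : nat) (x : nat -> R) (i : nat) (y : R) : Prop :=
  x (i - 1)%nat <= y /\ (if Nat.eqb i n then y <= x i else y < x i).

Definition in_pieceb (n : nat) (x : nat -> R) (i : nat) (y : R) : bool :=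
  (if Rle_dec (x (i - 1)%nat) y then true else false) &&
  (if Nat.eqb i n then (if Rle_dec y (x i) then true else false)
                  else (if Rlt_dec y (x i) then true else false)).

(* Sum over i = 1..k of the piece contributions (at most one is nonzero). *)
Fixpoint Tpieces (n : nat) (x : nat -> R) (Sc li : nat -> R -> R)
    (Lf g : R -> R) (k : nat) (y : R) : R :=
  match k with
  | O => 0
  | S k' =>
      (if in_pieceb n x k y
       then Sc k (li k y) * (g (li k y) - Lf (li k y)) else 0)
      + Tpieces n x Sc li Lf g k' y
  end.

Definition Tmap (n : nat) (x : nat -> R) (f Lf : R -> R) (Sc li : nat -> R -> R)
    (g : R -> R) : R -> R :=
  fun y => f y + Tpieces n x Sc li Lf g n y.

Definition semilinear (a b : R) (L : (R -> R) -> (R -> R)) : Prop :=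
  (forall u v, CplusI a b u -> CplusI a b v ->
     forall y, a <= y <= b -> L (fun z => u z + v z) y = L u y + L v y) /\
  (forall (lam : R) u, 0 <= lam -> CplusI a b u ->
     forall y, a <= y <= b -> L (fun z => lam * u z) y = lam * L u y).

Definition bounded_op (a b : R) (L : (R -> R) -> (R -> R)) : Prop :=
  exists M, 0 < M /\ forall u, CplusI a b u ->
    dI a b (L u) (fun _ => 0) <= M * dI a b u (fun _ => 0).

From Stdlib Require Import Reals Lra Lia.
From Coquelicot Require Import Coquelicot.
Open Scope R_scope.

(* On the piece I_i one has T g - T h = (S_i o l_i^-1) * ((g - h) o l_i^-1), and
   l_i^-1 maps I_i into I, so |T g - T h| <= S_oo * d(g, h) pointwise: T is an
   S_oo-contraction for the sup metric.  The join-up conditions make each T g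
   continuous, so T maps C^+I into itself; the Picard iterates starting from 0
   satisfy a geometric Cauchy bound, hence converge uniformly to a continuous,
   nonnegative fixed point, which is unique because T contracts. *)

Lemma ball_Rabs (c d z : R) : ball c d z <-> Rabs (z - c) < d.
Proof. unfold ball; simpl; unfold AbsRing_ball, abs, minus, plus, opp; simpl; tauto. Qed.

Definition cont_ed (a b : R) (g : R -> R) : Prop :=
  forall y, a <= y <= b -> forall eps, 0 < eps -> exists d, 0 < d /\
    forall z, a <= z <= b -> Rabs (z - y) < d -> Rabs (g z - g y) < eps.

Lemma cont_on_ed a b g : cont_on a b g <-> cont_ed a b g.
Proof.
  split.
  - intros H y Hy eps Heps.
    destruct (proj1 (filterlim_locally _ _) (H y Hy) (mkposreal eps Heps)) as [d Hd].
    exists d; split; [apply cond_pos|].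
    intros z Hz Hzy. apply ball_Rabs, Hd; [apply ball_Rabs|]; assumption.
  - intros H y Hy. apply filterlim_locally. intros eps.
    destruct (H y Hy eps (cond_pos eps)) as [d [Hd Hd']].
    exists (mkposreal d Hd). intros z Hz Hz'. apply ball_Rabs, Hd'; [|apply ball_Rabs]; assumption.
Qed.

Lemma cont_ed_comp_2 (op : R -> R -> R) a b u v :
  (forall p q, filterlim (fun z : R * R => op (fst z) (snd z))
                 (filter_prod (locally p) (locally q)) (locally (op p q))) ->
  cont_ed a b u -> cont_ed a b v -> cont_ed a b (fun z => op (u z) (v z)).
Proof.
  intros Hop Hu Hv. apply cont_on_ed. intros y Hy.
  apply cont_on_ed in Hu, Hv.
  exact (filterlim_comp_2 u v op (Hu y Hy) (Hv y Hy) (Hop _ _)).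
Qed.

Lemma cont_ed_plus a b u v :
  cont_ed a b u -> cont_ed a b v -> cont_ed a b (fun z => u z + v z).
Proof. apply cont_ed_comp_2. apply (filterlim_plus (K := R_AbsRing) (V := R_NormedModule)). Qed.

Lemma cont_ed_mult a b u v :
  cont_ed a b u -> cont_ed a b v -> cont_ed a b (fun z => u z * v z).
Proof. apply cont_ed_comp_2. apply (filterlim_mult (K := R_AbsRing)). Qed.

Lemma cont_ed_opp a b u : cont_ed a b u -> cont_ed a b (fun z => - u z).
Proof.
  intros Hu y Hy eps Heps. destruct (Hu y Hy eps Heps) as [d [Hd H]].
  exists d; split; [exact Hd|]. intros z Hz Hzy.
  rewrite <- Rabs_Ropp. replace (- (- u z - - u y)) with (u z - u y) by ring. auto.
Qed.

Lemma cont_ed_minus a b u v :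
  cont_ed a b u -> cont_ed a b v -> cont_ed a b (fun z => u z - v z).
Proof. intros Hu Hv. exact (cont_ed_plus _ _ _ _ Hu (cont_ed_opp _ _ _ Hv)). Qed.

Lemma cont_ed_const a b c : cont_ed a b (fun _ => c).
Proof.
  intros y _ eps Heps. exists 1; split; [lra|].
  intros. rewrite Rminus_eq_0, Rabs_R0. exact Heps.
Qed.

Lemma cont_ed_comp a b c d (h u : R -> R) :
  (forall z, a <= z <= b -> c <= h z <= d) ->
  cont_ed a b h -> cont_ed c d u -> cont_ed a b (fun z => u (h z)).
Proof.
  intros Hm Hh Hu y Hy eps Heps.
  destruct (Hu (h y) (Hm y Hy) eps Heps) as [d1 [Hd1 H1]].
  destruct (Hh y Hy d1 Hd1) as [d2 [Hd2 H2]].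
  exists d2; split; auto.
Qed.

Lemma cont_ed_restrict a b c d u : a <= c -> d <= b -> cont_ed a b u -> cont_ed c d u.
Proof.
  intros Hac Hdb Hu y Hy eps Heps. destruct (Hu y ltac:(lra) eps Heps) as [e [He H]].
  exists e; split; [exact He|]. intros z Hz Hzy. apply H; [lra | exact Hzy].
Qed.

Lemma cont_ed_at_left a b g : a < b -> cont_ed a b g -> filterlim g (at_left b) (locally (g b)).
Proof.
  intros Hab Hg. apply filterlim_locally. intros eps.
  destruct (Hg b ltac:(lra) eps (cond_pos eps)) as [d [Hd H]].
  exists (mkposreal _ (Rmin_pos d (b - a) Hd ltac:(lra))).
  intros z Hz Hzb. apply ball_Rabs in Hz; simpl in Hz.
  pose proof (Rmin_l d (b - a)). pose proof (Rmin_r d (b - a)).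
  apply Rabs_lt_between' in Hz. apply ball_Rabs, H; [lra|]. apply Rabs_lt_between'; lra.
Qed.

Lemma cont_ed_at_right a b g : a < b -> cont_ed a b g -> filterlim g (at_right a) (locally (g a)).
Proof.
  intros Hab Hg. apply filterlim_locally. intros eps.
  destruct (Hg a ltac:(lra) eps (cond_pos eps)) as [d [Hd H]].
  exists (mkposreal _ (Rmin_pos d (b - a) Hd ltac:(lra))).
  intros z Hz Hza. apply ball_Rabs in Hz; simpl in Hz.
  pose proof (Rmin_l d (b - a)). pose proof (Rmin_r d (b - a)).
  apply Rabs_lt_between' in Hz. apply ball_Rabs, H; [lra|]. apply Rabs_lt_between'; lra.
Qed.

Lemma filterlim_R_unique {F : (R -> Prop) -> Prop} (FF : ProperFilter F) (g : R -> R) c1 c2 :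
  filterlim g F (locally c1) -> filterlim g F (locally c2) -> c1 = c2.
Proof.
  exact (@filterlim_locally_unique _ R_AbsRing R_NormedModule F
           (Proper_StrongProper _ FF) g c1 c2).
Qed.

Definition clamp (a b z : R) : R := Rmax a (Rmin z b).

Lemma clamp_in a b z : a <= b -> a <= clamp a b z <= b.
Proof. intros. unfold clamp, Rmax, Rmin. repeat destruct Rle_dec; lra. Qed.

Lemma clamp_id a b z : a <= z <= b -> clamp a b z = z.
Proof. intros. unfold clamp, Rmax, Rmin. repeat destruct Rle_dec; lra. Qed.

Lemma clamp_lipschitz a b z w : a <= b -> Rabs (clamp a b z - clamp a b w) <= Rabs (z - w).
Proof.
  intros. unfold clamp, Rmax, Rmin, Rabs.
  repeat destruct Rle_dec; repeat destruct Rcase_abs; lra.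
Qed.

(* [g] extended by constants outside [a,b] is continuous on the whole line,
   so Stdlib's extreme value theorem applies to it. *)
Lemma cont_ed_bounded a b g : a <= b -> cont_ed a b g ->
  exists M, forall y, a <= y <= b -> Rabs (g y) <= M.
Proof.
  intros Hab Hg.
  assert (Hc : forall c, continuity_pt (fun z => g (clamp a b z)) c).
  { intros c eps Heps.
    destruct (Hg (clamp a b c) (clamp_in a b c Hab) eps Heps) as [d [Hd H]].
    exists d; split; [exact Hd|]. intros z [_ Hz]. apply H; [apply clamp_in; exact Hab|].
    eapply Rle_lt_trans; [apply clamp_lipschitz; exact Hab | exact Hz]. }
  destruct (continuity_ab_maj (fun z => g (clamp a b z)) a b Hab (fun c _ => Hc c))
    as [M1 [HM1 _]].
  destruct (continuity_ab_maj (fun z => - g (clamp a b z)) a b Hab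
     (fun c _ => continuity_pt_opp _ _ (Hc c))) as [M2 [HM2 _]].
  exists (Rmax (g (clamp a b M1)) (- g (clamp a b M2))).
  intros y Hy. specialize (HM1 y Hy). specialize (HM2 y Hy). simpl in HM1, HM2.
  rewrite clamp_id in HM1, HM2 by exact Hy.
  unfold Rabs, Rmax. repeat destruct Rle_dec; destruct Rcase_abs; lra.
Qed.

Lemma Rmax_minus_Rmin u v : Rmax u v - Rmin u v = Rabs (u - v).
Proof. unfold Rmax, Rmin, Rabs. repeat destruct Rle_dec; destruct Rcase_abs; lra. Qed.

(* Without an a priori bound the supremum in [dI] could be [p_infty], and then
   [dI] would be the junk value [real p_infty = 0]. *)
Lemma dI_spec a b g h M : a <= b ->
  (forall y, a <= y <= b -> Rabs (g y - h y) <= M) ->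
  (forall y, a <= y <= b -> Rabs (g y - h y) <= dI a b g h) /\
  (forall B, (forall y, a <= y <= b -> Rabs (g y - h y) <= B) -> dI a b g h <= B).
Proof.
  intros Hab HM. unfold dI.
  set (E := fun r => exists y, a <= y <= b /\ r = Rmax (g y) (h y) - Rmin (g y) (h y)).
  destruct (Lub_Rbar_correct E) as [Hub Hleast].
  assert (Hub' : forall y, a <= y <= b -> Rbar_le (Rabs (g y - h y)) (Lub_Rbar E)).
  { intros y Hy. apply Hub. exists y. rewrite Rmax_minus_Rmin. split; [exact Hy | reflexivity]. }
  assert (Hleast' : forall B, (forall y, a <= y <= b -> Rabs (g y - h y) <= B) ->
      Rbar_le (Lub_Rbar E) B).
  { intros B HB. apply Hleast. intros r [y [Hy ->]]. rewrite Rmax_minus_Rmin. exact (HB y Hy). }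
  pose proof (Hub' a ltac:(lra)) as Hlow. pose proof (Hleast' M HM) as Hhigh.
  destruct (Lub_Rbar E) as [l| |]; simpl in *; try contradiction.
  split; [exact Hub' | exact Hleast'].
Qed.

Lemma dI_least a b g h B : a <= b ->
  (forall y, a <= y <= b -> Rabs (g y - h y) <= B) -> dI a b g h <= B.
Proof. intros Hab HB. exact (proj2 (dI_spec a b g h B Hab HB) B HB). Qed.

Lemma dI_ub a b g h y : cont_ed a b g -> cont_ed a b h -> a <= y <= b ->
  Rabs (g y - h y) <= dI a b g h.
Proof.
  intros Hg Hh Hy.
  destruct (cont_ed_bounded a b _ ltac:(lra) (cont_ed_minus _ _ _ _ Hg Hh)) as [M HM].
  exact (proj1 (dI_spec a b g h M ltac:(lra) HM) y Hy).
Qed.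

Definition unif_cvg (a b : R) (u : nat -> R -> R) (v : R -> R) : Prop :=
  forall eps, 0 < eps -> exists N, forall k, (N <= k)%nat ->
    forall y, a <= y <= b -> Rabs (v y - u k y) < eps.

Lemma cont_ed_unif_limit a b u v :
  (forall k, cont_ed a b (u k)) -> unif_cvg a b u v -> cont_ed a b v.
Proof.
  intros Hu Huv y Hy eps Heps.
  destruct (Huv (eps / 3)) as [N HN]; [lra|].
  destruct (Hu N y Hy (eps / 3)) as [d [Hd Hd']]; [lra|].
  exists d; split; [exact Hd|]. intros z Hz Hzy.
  pose proof (HN N (le_n N) z Hz) as H1. pose proof (HN N (le_n N) y Hy) as H2.
  pose proof (Hd' z Hz Hzy) as H3.
  apply Rabs_lt_between in H1, H2, H3. apply Rabs_lt_between. lra.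
Qed.

Lemma unif_limit_nonneg a b u v y :
  (forall k, 0 <= u k y) -> unif_cvg a b u v -> a <= y <= b -> 0 <= v y.
Proof.
  intros Hu Huv Hy. apply Rnot_lt_le. intros Hneg.
  destruct (Huv (- v y)) as [N HN]; [lra|].
  specialize (HN N (le_n N) y Hy). specialize (Hu N).
  apply Rabs_lt_between in HN. lra.
Qed.

Lemma geometric_eventually_lt C s eps : 0 <= s < 1 -> 0 < eps ->
  exists N, forall k, (N <= k)%nat -> C * s ^ k < eps.
Proof.
  intros Hs Heps. pose proof (Rabs_pos C) as HC.
  destruct (pow_lt_1_zero s ltac:(rewrite Rabs_right; lra) (eps / (Rabs C + 1)))
    as [N HN]; [apply Rdiv_lt_0_compat; lra|].
  exists N. intros k Hk. specialize (HN k Hk).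
  assert (Hsk : 0 <= s ^ k) by (apply pow_le; lra).
  rewrite Rabs_right in HN by lra.
  assert (C * s ^ k <= Rabs C * s ^ k) by (apply Rmult_le_compat_r; [lra | apply Rle_abs]).
  assert (Rabs C * s ^ k <= Rabs C * (eps / (Rabs C + 1))) by (apply Rmult_le_compat_l; lra).
  replace (Rabs C * (eps / (Rabs C + 1))) with (eps - eps / (Rabs C + 1)) in * by (field; lra).
  assert (0 < eps / (Rabs C + 1)) by (apply Rdiv_lt_0_compat; lra).
  lra.
Qed.

Lemma geometric_tail_bound (u : nat -> R) M s : 0 <= s < 1 ->
  (forall k, Rabs (u (S k) - u k) <= M * s ^ k) ->
  forall k m, Rabs (u (k + m)%nat - u k) <= M * s ^ k * (1 - s ^ m) / (1 - s).
Proof.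
  intros Hs Hu k m. induction m as [|m IH].
  - rewrite Nat.add_0_r, Rminus_eq_0, Rabs_R0. simpl. right; field; lra.
  - rewrite Nat.add_succ_r.
    replace (u (S (k + m)) - u k) with ((u (S (k + m)) - u (k + m)%nat) + (u (k + m)%nat - u k))
      by ring.
    eapply Rle_trans; [apply Rabs_triang|].
    replace (M * s ^ k * (1 - s ^ S m) / (1 - s))
      with (M * s ^ (k + m) + M * s ^ k * (1 - s ^ m) / (1 - s))
      by (rewrite pow_add; simpl; field; lra).
    apply Rplus_le_compat; [apply Hu | exact IH].
Qed.

Lemma geometric_cauchy_limit (u : nat -> R) M s : 0 <= s < 1 ->
  (forall k, Rabs (u (S k) - u k) <= M * s ^ k) ->
  forall k, Rabs (real (Lim_seq u) - u k) <= M * s ^ k / (1 - s).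
Proof.
  intros Hs Hu.
  assert (HM : 0 <= M) by (pose proof (Hu 0%nat); pose proof (Rabs_pos (u 1%nat - u 0%nat));
                            simpl in *; lra).
  assert (Htail : forall k m, (k <= m)%nat -> Rabs (u m - u k) <= M * s ^ k / (1 - s)).
  { intros k m Hkm. replace m with (k + (m - k))%nat by lia.
    eapply Rle_trans; [apply (geometric_tail_bound u M s Hs Hu)|].
    assert (0 <= M * s ^ k / (1 - s))
      by (apply Rmult_le_pos; [apply Rmult_le_pos; [lra | apply pow_le; lra]
                              | left; apply Rinv_0_lt_compat; lra]).
    assert (0 <= s ^ (m - k)) by (apply pow_le; lra).
    replace (M * s ^ k * (1 - s ^ (m - k)) / (1 - s))
      with (M * s ^ k / (1 - s) * (1 - s ^ (m - k))) by (field; lra).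
    nra. }
  assert (Hlim : is_lim_seq u (real (Lim_seq u))).
  { apply Lim_seq_correct', ex_lim_seq_cauchy_corr. intros eps.
    destruct (geometric_eventually_lt (M / (1 - s)) s (eps / 2) Hs) as [N HN];
      [destruct eps; simpl; lra|].
    exists N. intros p q Hp Hq.
    pose proof (Htail N p Hp). pose proof (Htail N q Hq). pose proof (HN N (le_n N)).
    replace (M / (1 - s) * s ^ N) with (M * s ^ N / (1 - s)) in * by (field; lra).
    replace (u p - u q) with ((u p - u N) - (u q - u N)) by ring.
    eapply Rle_lt_trans; [apply Rabs_triang|]. rewrite Rabs_Ropp. lra. }
  intros k.
  assert (Hdist : is_lim_seq (fun m => Rabs (u m - u k)) (Rabs (real (Lim_seq u) - u k)))
    by exact (is_lim_seq_abs _ _ (is_lim_seq_minus' _ _ _ _ Hlim (is_lim_seq_const (u k)))).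
  refine (is_lim_seq_le_loc _ _ _ _ _ Hdist (is_lim_seq_const (M * s ^ k / (1 - s)))).
  exists k. exact (Htail k).
Qed.

Lemma unif_cvg_geometric a b (u : nat -> R -> R) M s : 0 <= s < 1 ->
  (forall k y, a <= y <= b -> Rabs (u (S k) y - u k y) <= M * s ^ k) ->
  unif_cvg a b u (fun y => real (Lim_seq (fun k => u k y))).
Proof.
  intros Hs Hu eps Heps.
  destruct (geometric_eventually_lt (M / (1 - s)) s eps Hs Heps) as [N HN].
  exists N. intros k Hk y Hy.
  eapply Rle_lt_trans.
  { apply (geometric_cauchy_limit (fun k => u k y) M s Hs). intros j. apply Hu, Hy. }
  replace (M * s ^ k / (1 - s)) with (M / (1 - s) * s ^ k) by (field; lra).
  exact (HN k Hk).
Qed.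

Lemma common_radius (P : nat -> R -> Prop) m :
  (forall i d d', P i d -> 0 < d' <= d -> P i d') ->
  (forall i, (1 <= i <= m)%nat -> exists d, 0 < d /\ P i d) ->
  exists d, 0 < d /\ forall i, (1 <= i <= m)%nat -> P i d.
Proof.
  intros Hmono. induction m as [|m IH]; intros H.
  - exists 1; split; [lra|]. intros; lia.
  - destruct IH as [d1 [Hd1 H1]]; [intros i Hi; apply H; lia|].
    destruct (H (S m) ltac:(lia)) as [d2 [Hd2 H2]].
    pose proof (Rmin_l d1 d2). pose proof (Rmin_r d1 d2). pose proof (Rmin_pos d1 d2 Hd1 Hd2).
    exists (Rmin d1 d2); split; [assumption|].
    intros i Hi. destruct (Nat.eq_dec i (S m)) as [->|Hne].
    + apply Hmono with d2; [exact H2 | lra].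
    + apply Hmono with d1; [apply H1; lia | lra].
Qed.

Lemma in_pieceb_spec n x i y : in_pieceb n x i y = true <-> in_piece n x i y.
Proof.
  unfold in_pieceb, in_piece. destruct (Nat.eqb i n);
    repeat destruct Rle_dec; repeat destruct Rlt_dec; simpl; split; intros;
    try tauto; try discriminate; lra.
Qed.

Section Partition.

Variables (n : nat) (x : nat -> R).
Hypothesis x_incr : forall i, (i < n)%nat -> x i < x (i + 1)%nat.

Lemma x_lt i j : (i < j <= n)%nat -> x i < x j.
Proof.
  induction j as [|j IH]; intros Hij; [lia|].
  replace (S j) with (j + 1)%nat by lia.
  destruct (Nat.eq_dec i j) as [->|Hne]; [apply x_incr; lia|].
  apply Rlt_trans with (x j); [apply IH; lia | apply x_incr; lia].
Qed.

Lemma x_le i j : (i <= j <= n)%nat -> x i <= x j.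
Proof.
  intros Hij. destruct (Nat.eq_dec i j) as [->|Hne]; [lra|].
  left; apply x_lt; lia.
Qed.

Lemma in_piece_closed i y : in_piece n x i y -> x (i - 1)%nat <= y <= x i.
Proof. intros [H1 H2]. split; [exact H1|]. destruct (Nat.eqb i n); lra. Qed.

Lemma in_piece_of_lt i y : x (i - 1)%nat <= y < x i -> in_piece n x i y.
Proof. intros [H1 H2]. split; [exact H1|]. destruct (Nat.eqb i n); lra. Qed.

Lemma in_piece_last y : x (n - 1)%nat <= y <= x n -> in_piece n x n y.
Proof. intros [H1 H2]. split; [exact H1|]. rewrite Nat.eqb_refl. exact H2. Qed.

Lemma in_piece_I i y : (1 <= i <= n)%nat -> in_piece n x i y -> x 0%nat <= y <= x n.
Proof.
  intros Hi Hp. apply in_piece_closed in Hp.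
  pose proof (x_le 0 (i - 1) ltac:(lia)). pose proof (x_le i n ltac:(lia)). lra.
Qed.

Lemma in_piece_unique i k y : (1 <= i <= n)%nat -> (1 <= k <= n)%nat ->
  in_piece n x i y -> in_piece n x k y -> i = k.
Proof.
  intros Hi Hk [H1 H2] [H3 H4].
  destruct (Nat.lt_trichotomy i k) as [Hlt|[Heq|Hlt]]; [exfalso| exact Heq| exfalso].
  - rewrite (proj2 (Nat.eqb_neq i n)) in H2 by lia.
    pose proof (x_le i (k - 1) ltac:(lia)). lra.
  - rewrite (proj2 (Nat.eqb_neq k n)) in H4 by lia.
    pose proof (x_le k (i - 1) ltac:(lia)). lra.
Qed.

Lemma in_piece_exists y : (1 <= n)%nat -> x 0%nat <= y <= x n ->
  exists i, (1 <= i <= n)%nat /\ in_piece n x i y.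
Proof.
  intros Hn Hy.
  assert (Hbelow : forall m, (m <= n)%nat -> y < x m ->
     exists i, (1 <= i <= m)%nat /\ x (i - 1)%nat <= y < x i).
  { induction m as [|m IH]; intros Hm Hym; [lra|].
    destruct (Rlt_dec y (x m)) as [Hl|Hl].
    - destruct IH as [i [Hi Hi']]; [lia | exact Hl|]. exists i; split; [lia | exact Hi'].
    - exists (S m); split; [lia|]. replace (S m - 1)%nat with m by lia. lra. }
  destruct (Rlt_dec y (x n)) as [Hl|Hl].
  - destruct (Hbelow n (le_n n) Hl) as [i [Hi Hi']].
    exists i; split; [exact Hi | apply in_piece_of_lt, Hi'].
  - exists n; split; [lia|]. apply in_piece_last.
    pose proof (x_le (n - 1) n ltac:(lia)). lra.
Qed.

Lemma Tpieces_in_piece Sc li Lf g i y : (1 <= i <= n)%nat -> in_piece n x i y ->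
  Tpieces n x Sc li Lf g n y = Sc i (li i y) * (g (li i y) - Lf (li i y)).
Proof.
  intros Hi Hp.
  assert (H : forall m, (m <= n)%nat -> Tpieces n x Sc li Lf g m y =
     if Nat.leb i m then Sc i (li i y) * (g (li i y) - Lf (li i y)) else 0).
  { induction m as [|m IH]; intros Hm; simpl.
    - destruct i; [lia | reflexivity].
    - rewrite IH by lia.
      destruct (Nat.eq_dec i (S m)) as [->|Hne].
      + rewrite (proj2 (in_pieceb_spec n x (S m) y) Hp), Nat.leb_refl,
          (proj2 (Nat.leb_gt (S m) m)) by lia. ring.
      + assert (Hb : in_pieceb n x (S m) y = false).
        { destruct (in_pieceb n x (S m) y) eqn:E; [|reflexivity].
          apply in_pieceb_spec in E. exfalso. apply Hne, (in_piece_unique i (S m) y); auto; lia. }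
        rewrite Hb, Rplus_0_l.
        destruct (Nat.leb_spec i m); destruct (Nat.leb_spec i (S m)); reflexivity || lia. }
  rewrite H, (proj2 (Nat.leb_le i n)) by lia. reflexivity.
Qed.

Lemma cont_ed_piecewise (h : R -> R) (Q : nat -> R -> R) : (1 <= n)%nat ->
  (forall i, (1 <= i <= n)%nat -> cont_ed (x (i - 1)%nat) (x i) (Q i)) ->
  (forall i, (1 <= i <= n)%nat -> forall z, x (i - 1)%nat <= z <= x i -> h z = Q i z) ->
  cont_ed (x 0%nat) (x n) h.
Proof.
  intros Hn HQ Hh y Hy eps Heps.
  destruct (common_radius (fun i d => forall z, x (i - 1)%nat <= z <= x i ->
       Rabs (z - y) < d -> Rabs (h z - h y) < eps) n) as [d [Hd Hd']].
  - intros i d d' Hdi Hd' z Hz Hzy. apply Hdi; [exact Hz | lra].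
  - intros i Hi. destruct (Rlt_dec y (x (i - 1)%nat)) as [Hl|Hl].
    + exists (x (i - 1)%nat - y); split; [lra|]. intros z Hz Hzy.
      apply Rabs_lt_between' in Hzy. lra.
    + destruct (Rlt_dec (x i) y) as [Hr|Hr].
      * exists (y - x i); split; [lra|]. intros z Hz Hzy.
        apply Rabs_lt_between' in Hzy. lra.
      * destruct (HQ i Hi y ltac:(lra) eps Heps) as [d [Hd H]].
        exists d; split; [exact Hd|]. intros z Hz Hzy.
        rewrite (Hh i Hi z Hz), (Hh i Hi y ltac:(lra)). exact (H z Hz Hzy).
  - exists d; split; [exact Hd|]. intros z Hz Hzy.
    destruct (in_piece_exists z Hn Hz) as [k [Hk Hp]].
    exact (Hd' k Hk z (in_piece_closed k z Hp) Hzy).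
Qed.

End Partition.

Section Tmap.

Variables (n : nat) (x : nat -> R) (f Lf : R -> R) (Sc li : nat -> R -> R).
Hypothesis x_incr : forall i, (i < n)%nat -> x i < x (i + 1)%nat.
Hypothesis li_maps : forall i, (1 <= i <= n)%nat -> forall y, x (i - 1)%nat <= y <= x i ->
  x 0%nat <= li i y <= x n.

Definition Tbranch (g : R -> R) (i : nat) (z : R) : R :=
  f z + Sc i (li i z) * (g (li i z) - Lf (li i z)).

Lemma Tmap_in_piece g i z : (1 <= i <= n)%nat -> in_piece n x i z ->
  Tmap n x f Lf Sc li g z = Tbranch g i z.
Proof.
  intros Hi Hp. unfold Tmap, Tbranch.
  rewrite (Tpieces_in_piece n x x_incr Sc li Lf g i z Hi Hp). reflexivity.
Qed.

Lemma Tmap_contraction s g h : (1 <= n)%nat -> 0 <= s ->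
  (forall i, (1 <= i <= n)%nat -> forall y, x 0%nat <= y <= x n -> Rabs (Sc i y) <= s) ->
  cont_ed (x 0%nat) (x n) g -> cont_ed (x 0%nat) (x n) h ->
  dI (x 0%nat) (x n) (Tmap n x f Lf Sc li g) (Tmap n x f Lf Sc li h)
    <= s * dI (x 0%nat) (x n) g h.
Proof.
  intros Hn Hs HS Hg Hh. apply dI_least; [apply (x_le n x x_incr); lia|].
  intros y Hy. destruct (in_piece_exists n x x_incr y Hn Hy) as [i [Hi Hp]].
  assert (Hz : x 0%nat <= li i y <= x n) by exact (li_maps i Hi y (in_piece_closed n x i y Hp)).
  rewrite !(Tmap_in_piece _ i y Hi Hp). unfold Tbranch.
  replace (f y + Sc i (li i y) * (g (li i y) - Lf (li i y)) -
           (f y + Sc i (li i y) * (h (li i y) - Lf (li i y))))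
    with (Sc i (li i y) * (g (li i y) - h (li i y))) by ring.
  rewrite Rabs_mult. apply Rmult_le_compat; [apply Rabs_pos | apply Rabs_pos | |].
  - exact (HS i Hi _ Hz).
  - exact (dI_ub _ _ g h _ Hg Hh Hz).
Qed.

Hypotheses
  (Hf : cont_ed (x 0%nat) (x n) f) (HLf : cont_ed (x 0%nat) (x n) Lf)
  (HS : forall i, (1 <= i <= n)%nat -> cont_ed (x 0%nat) (x n) (Sc i))
  (Hli : forall i, (1 <= i <= n)%nat -> cont_ed (x (i - 1)%nat) (x i) (li i)).

Lemma cont_ed_Tbranch g i : (1 <= i <= n)%nat -> cont_ed (x 0%nat) (x n) g ->
  cont_ed (x (i - 1)%nat) (x i) (Tbranch g i).
Proof.
  intros Hi Hg. unfold Tbranch.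
  apply cont_ed_plus.
  - apply (cont_ed_restrict (x 0%nat) (x n)); [apply (x_le n x x_incr); lia.. | exact Hf].
  - apply cont_ed_mult; [|apply cont_ed_minus];
      apply (cont_ed_comp _ _ (x 0%nat) (x n)); auto.
Qed.

(* The two one-sided limits of [Tmap g] at [x j] are the values there of the
   continuous branches [j] and [j + 1]. *)
Lemma Tbranch_join g j (c : R) : (1 <= j <= n - 1)%nat -> cont_ed (x 0%nat) (x n) g ->
  filterlim (Tmap n x f Lf Sc li g) (at_left (x j)) (locally c) ->
  filterlim (Tmap n x f Lf Sc li g) (at_right (x j)) (locally c) ->
  Tbranch g j (x j) = Tbranch g (S j) (x j).
Proof.
  intros Hj Hg Hl Hr.
  pose proof (x_lt n x x_incr (j - 1) j ltac:(lia)) as Hlo.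
  pose proof (x_lt n x x_incr j (S j) ltac:(lia)) as Hhi.
  transitivity c; [|symmetry].
  - apply (filterlim_R_unique (at_left_proper_filter (x j)) (Tbranch g j)).
    + apply (cont_ed_at_left (x (j - 1)%nat)); [exact Hlo|].
      apply cont_ed_Tbranch; [lia | exact Hg].
    + refine (filterlim_ext_loc _ _ _ Hl).
      exists (mkposreal _ (proj2 (Rlt_0_minus _ _) Hlo)). intros z Hz Hzj.
      apply ball_Rabs, Rabs_lt_between' in Hz; simpl in Hz.
      apply Tmap_in_piece; [lia|]. apply in_piece_of_lt. lra.
  - apply (filterlim_R_unique (at_right_proper_filter (x j)) (Tbranch g (S j))).
    + pose proof (cont_ed_Tbranch g (S j) ltac:(lia) Hg) as Hcont.
      replace (S j - 1)%nat with j in Hcont by lia.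
      exact (cont_ed_at_right _ _ _ Hhi Hcont).
    + refine (filterlim_ext_loc _ _ _ Hr).
      exists (mkposreal _ (proj2 (Rlt_0_minus _ _) Hhi)). intros z Hz Hzj.
      apply ball_Rabs, Rabs_lt_between' in Hz; simpl in Hz.
      apply Tmap_in_piece; [lia|]. apply in_piece_of_lt.
      replace (S j - 1)%nat with j by lia. lra.
Qed.

Lemma cont_ed_Tmap g : (1 <= n)%nat -> cont_ed (x 0%nat) (x n) g ->
  (forall j, (1 <= j <= n - 1)%nat -> exists c : R,
     filterlim (Tmap n x f Lf Sc li g) (at_left (x j)) (locally c) /\
     filterlim (Tmap n x f Lf Sc li g) (at_right (x j)) (locally c)) ->
  cont_ed (x 0%nat) (x n) (Tmap n x f Lf Sc li g).
Proof.
  intros Hn Hg Hjoin.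
  apply (cont_ed_piecewise n x x_incr _ (Tbranch g) Hn).
  { intros i Hi. apply cont_ed_Tbranch; assumption. }
  intros i Hi z Hz.
  destruct (Rlt_dec z (x i)) as [Hlt|Hge]; [apply Tmap_in_piece, in_piece_of_lt; [exact Hi | lra]|].
  replace z with (x i) by lra.
  destruct (Nat.eq_dec i n) as [->|Hne]; [apply Tmap_in_piece, in_piece_last; [exact Hi | lra]|].
  destruct (Hjoin i ltac:(lia)) as [c [Hl Hr]].
  rewrite (Tbranch_join g i c ltac:(lia) Hg Hl Hr).
  pose proof (x_lt n x x_incr i (S i) ltac:(lia)).
  apply Tmap_in_piece; [lia|]. apply in_piece_of_lt. replace (S i - 1)%nat with i by lia. lra.
Qed.

End Tmap.

Section SupContraction.

Variables (a b s : R) (T : (R -> R) -> R -> R).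
Hypotheses (Hab : a <= b) (Hs : 0 <= s < 1)
  (T_maps : forall g, CplusI a b g -> CplusI a b (T g))
  (T_contr : forall g h, CplusI a b g -> CplusI a b h ->
     dI a b (T g) (T h) <= s * dI a b g h).

Let picard (k : nat) : R -> R := Nat.iter k T (fun _ => 0).

Lemma picard_CplusI k : CplusI a b (picard k).
Proof.
  induction k as [|k IH]; [|exact (T_maps _ IH)].
  split; [apply cont_on_ed, cont_ed_const | intros; apply Rle_refl].
Qed.

Lemma picard_step k y : a <= y <= b ->
  Rabs (picard (S k) y - picard k y) <= dI a b (picard 1) (picard 0) * s ^ k.
Proof.
  intros Hy.
  assert (Hd : dI a b (picard (S k)) (picard k) <= dI a b (picard 1) (picard 0) * s ^ k).
  { induction k as [|k IH]; [rewrite pow_O, Rmult_1_r; apply Rle_refl|].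
    eapply Rle_trans; [exact (T_contr _ _ (picard_CplusI (S k)) (picard_CplusI k))|]. simpl pow.
    apply Rmult_le_compat_l with (r := s) in IH; [lra | apply Hs]. }
  eapply Rle_trans; [|exact Hd].
  apply dI_ub; [apply cont_on_ed, picard_CplusI.. | exact Hy].
Qed.

Lemma sup_contraction_fixed_point :
  exists fs, CplusI a b fs /\ forall y, a <= y <= b -> T fs y = fs y.
Proof.
  set (fs := fun y => real (Lim_seq (fun k => picard k y))).
  assert (Hcvg : unif_cvg a b picard fs)
    by exact (unif_cvg_geometric a b picard _ s Hs picard_step).
  assert (Hfs : CplusI a b fs).
  { split.
    - apply cont_on_ed, (cont_ed_unif_limit a b picard); [|exact Hcvg].
      intros k. apply cont_on_ed, picard_CplusI.
    - intros y Hy. apply (unif_limit_nonneg a b picard fs y); [|exact Hcvg | exact Hy].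
      intros k. apply (picard_CplusI k), Hy. }
  exists fs. split; [exact Hfs|]. intros y Hy. apply cond_eq. intros eps Heps.
  destruct (Hcvg (eps / 2)) as [N HN]; [lra|].
  assert (Hclose : dI a b fs (picard N) <= eps / 2).
  { apply dI_least; [exact Hab|]. intros z Hz. left. exact (HN N (le_n N) z Hz). }
  assert (HT : Rabs (T fs y - T (picard N) y) <= s * (eps / 2)).
  { eapply Rle_trans.
    { apply dI_ub; [apply cont_on_ed, T_maps.. | exact Hy]; [exact Hfs | apply picard_CplusI]. }
    eapply Rle_trans; [apply T_contr; [exact Hfs | apply picard_CplusI]|].
    apply Rmult_le_compat_l; [apply Hs | exact Hclose]. }
  pose proof (HN (S N) (le_S _ _ (le_n N)) y Hy) as Hnext.
  replace (T fs y - fs y)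
    with ((T fs y - T (picard N) y) - (fs y - picard (S N) y)) by (simpl; ring).
  eapply Rle_lt_trans; [apply Rabs_triang|]. rewrite Rabs_Ropp.
  assert (s * (eps / 2) <= eps / 2) by (destruct Hs; nra).
  lra.
Qed.

Lemma sup_contraction_fixed_point_unique g h :
  CplusI a b g -> CplusI a b h ->
  (forall y, a <= y <= b -> T g y = g y) -> (forall y, a <= y <= b -> T h y = h y) ->
  forall y, a <= y <= b -> g y = h y.
Proof.
  intros Hg Hh Hgfix Hhfix.
  assert (Hpt : forall y, a <= y <= b -> Rabs (g y - h y) <= s * dI a b g h).
  { intros y Hy. rewrite <- (Hgfix y Hy), <- (Hhfix y Hy).
    eapply Rle_trans; [apply dI_ub; [apply cont_on_ed, T_maps; assumption.. | exact Hy]|].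
    exact (T_contr g h Hg Hh). }
  assert (Hd : dI a b g h <= s * dI a b g h) by exact (dI_least a b g h _ Hab Hpt).
  assert (Hd0 : 0 <= dI a b g h).
  { eapply Rle_trans; [apply Rabs_pos|].
    apply (dI_ub a b g h a); [apply cont_on_ed, Hg | apply cont_on_ed, Hh | lra]. }
  intros y Hy. pose proof (Hpt y Hy) as Hy'.
  assert (Habs : Rabs (g y - h y) <= 0) by nra.
  apply Rabs_le_between in Habs. lra.
Qed.

End SupContraction.

Theorem theorem5p3
  (n : nat) (x : nat -> R) (l li Sc : nat -> R -> R)
  (L : (R -> R) -> (R -> R)) (f : R -> R)
  (Hn : (1 <= n)%nat)
  (Hx0 : 0 <= x 0%nat)
  (Hxinc : forall i, (i < n)%nat -> x i < x (i + 1)%nat)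
  (* l_i : I -> [x_{i-1}, x_i] homeomorphism with inverse li_i, contractive *)
  (Hl_maps : forall i, (1 <= i <= n)%nat -> forall y, x 0%nat <= y <= x n ->
      x (i - 1)%nat <= l i y <= x i)
  (Hli_maps : forall i, (1 <= i <= n)%nat -> forall y, x (i - 1)%nat <= y <= x i ->
      x 0%nat <= li i y <= x n)
  (Hl_inv1 : forall i, (1 <= i <= n)%nat -> forall y, x 0%nat <= y <= x n ->
      li i (l i y) = y)
  (Hl_inv2 : forall i, (1 <= i <= n)%nat -> forall y, x (i - 1)%nat <= y <= x i ->
      l i (li i y) = y)
  (Hl_cont : forall i, (1 <= i <= n)%nat -> cont_on (x 0%nat) (x n) (l i))
  (Hli_cont : forall i, (1 <= i <= n)%nat -> cont_on (x (i - 1)%nat) (x i) (li i))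
  (Hl_contr : forall i, (1 <= i <= n)%nat -> exists c, 0 <= c < 1 /\
      forall y z, x 0%nat <= y <= x n -> x 0%nat <= z <= x n ->
        Rabs (l i y - l i z) <= c * Rabs (y - z))
  (Hl_x0 : forall i, (1 <= i <= n)%nat -> l i (x 0%nat) = x (i - 1)%nat)
  (Hl_xn : forall i, (1 <= i <= n)%nat -> l i (x n) = x i)
  (* L : C^+I -> C^+I bounded semi-linear *)
  (HL_maps : forall u, CplusI (x 0%nat) (x n) u -> CplusI (x 0%nat) (x n) (L u))
  (HL_semilin : semilinear (x 0%nat) (x n) L)
  (HL_bdd : bounded_op (x 0%nat) (x n) L)
  (Hf : CplusI (x 0%nat) (x n) f)
  (HS : forall i, (1 <= i <= n)%nat -> CplusI (x 0%nat) (x n) (Sc i))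
  (HLf0 : L f (x 0%nat) = f (x 0%nat))
  (HLfn : L f (x n) = f (x n))
  (* T g takes values in R_0^+ and satisfies the join-up conditions *)
  (HT_nonneg : forall g, CplusI (x 0%nat) (x n) g ->
      forall y, x 0%nat <= y <= x n -> 0 <= Tmap n x f (L f) Sc li g y)
  (HT_joinup : forall g, CplusI (x 0%nat) (x n) g ->
      forall j, (1 <= j <= n - 1)%nat -> exists c : R,
        filterlim (Tmap n x f (L f) Sc li g) (at_left (x j)) (locally c) /\
        filterlim (Tmap n x f (L f) Sc li g) (at_right (x j)) (locally c))
  (* S_infty < 1 *)
  (HSinf : exists Sinf, Sinf < 1 /\
      (forall i, (1 <= i <= n)%nat -> forall y, x 0%nat <= y <= x n ->
         Rabs (Sc i y) <= Sinf) /\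
      (exists i y, (1 <= i <= n)%nat /\ x 0%nat <= y <= x n /\ Rabs (Sc i y) = Sinf)) :
  (exists k, 0 <= k < 1 /\
     forall g h, CplusI (x 0%nat) (x n) g -> CplusI (x 0%nat) (x n) h ->
       dI (x 0%nat) (x n) (Tmap n x f (L f) Sc li g) (Tmap n x f (L f) Sc li h)
         <= k * dI (x 0%nat) (x n) g h) /\
  (exists fs, CplusI (x 0%nat) (x n) fs /\
     (forall y, x 0%nat <= y <= x n -> Tmap n x f (L f) Sc li fs y = fs y) /\
     (forall g, CplusI (x 0%nat) (x n) g ->
        (forall y, x 0%nat <= y <= x n -> Tmap n x f (L f) Sc li g y = g y) ->
        forall y, x 0%nat <= y <= x n -> g y = fs y) /\
     (forall i, (1 <= i <= n)%nat -> forall y, in_piece n x i y ->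
        fs y = f y + Sc i (li i y) * (fs (li i y) - L f (li i y)))).
Proof.
  destruct HSinf as [s [Hs1 [HSbound [i0 [y0 [Hi0 [Hy0 Hs0]]]]]]].
  assert (Hs : 0 <= s < 1) by (split; [rewrite <- Hs0; apply Rabs_pos | exact Hs1]).
  assert (HI : x 0%nat <= x n) by (apply (x_le n x Hxinc); lia).
  set (T := Tmap n x f (L f) Sc li).
  assert (T_maps : forall g, CplusI (x 0%nat) (x n) g -> CplusI (x 0%nat) (x n) (T g)).
  { intros g Hg. split; [|exact (HT_nonneg g Hg)].
    apply cont_on_ed, cont_ed_Tmap; auto.
    - apply cont_on_ed, Hf.
    - apply cont_on_ed, HL_maps, Hf.
    - intros i Hi. apply cont_on_ed, HS, Hi.
    - intros i Hi. apply cont_on_ed, Hli_cont, Hi.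
    - apply cont_on_ed, Hg. }
  assert (T_contr : forall g h, CplusI (x 0%nat) (x n) g -> CplusI (x 0%nat) (x n) h ->
       dI (x 0%nat) (x n) (T g) (T h) <= s * dI (x 0%nat) (x n) g h).
  { intros g h [Hg _] [Hh _].
    apply Tmap_contraction; auto; [apply Hs | apply cont_on_ed, Hg | apply cont_on_ed, Hh]. }
  split; [exists s; split; [exact Hs | exact T_contr]|].
  destruct (sup_contraction_fixed_point _ _ s T HI Hs T_maps T_contr) as [fs [Hfs Hfix]].
  exists fs. split; [exact Hfs|]. split; [exact Hfix|]. split.
  - intros g Hg Hgfix.
    exact (sup_contraction_fixed_point_unique _ _ s T HI Hs T_maps T_contr g fs Hg Hfs Hgfix Hfix).
  - intros i Hi y Hp.
    rewrite <- (Hfix y (in_piece_I n x Hxinc i y Hi Hp)) at 1.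
    exact (Tmap_in_piece n x f (L f) Sc li Hxinc fs i y Hi Hp).
Qed.
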